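(* For every positive integer $n$, $Y_{2n}(4\pi)\neq0$.
   Context: $Y_k$ denotes the Bessel function of the second kind of integer order $k$. *)

From Stdlib Require Import Reals Arith ClassicalEpsilon.
Open Scope R_scope.

(* The limit of a real sequence, when it exists (chosen by classical
   description; junk value otherwise). *)
Definition seq_lim (u : nat -> R) : R :=
  epsilon (inhabits 0) (fun l => Un_cv u l).

Definition series (f : nat -> R) : R := seq_lim (fun N => sum_f_R0 f N).

(* fin_sum f n = f 0 + ... + f (n-1)  (empty sum = 0). *)
Definition fin_sum (f : nat -> R) (n : nat) : R :=
  match n with
  | O => 0
  | S p => sum_f_R0 f p
  end.

Definition harmonic (m : nat) : R :=
  match m with
  | O => 0
  | S p => sum_f_R0 (fun j => / INR (S j)) p
  end.

Definition euler_gamma : R := seq_lim (fun m => harmonic m - ln (INR m)).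

(* Digamma at positive integers: psi(m+1) = -gamma + H_m. *)
Definition digamma_succ (m : nat) : R := - euler_gamma + harmonic m.

Definition BesselJ (n : nat) (x : R) : R :=
  (x / 2) ^ n *
  series (fun k => (- (x ^ 2 / 4)) ^ k / (INR (fact k) * INR (fact (n + k)))).

(* Bessel function of the second kind Y_n of integer order n >= 0,
   for x > 0 (DLMF 10.8.1). *)
Definition BesselY (n : nat) (x : R) : R :=
  - ((/ (x / 2) ^ n) / PI) *
    fin_sum (fun k => INR (fact (n - k - 1)) / INR (fact k) * (x ^ 2 / 4) ^ k) n
  + 2 / PI * ln (x / 2) * BesselJ n x
  - ((x / 2) ^ n / PI) *
    series (fun k => (digamma_succ k + digamma_succ (n + k)) *
                     (- (x ^ 2 / 4)) ^ k / (INR (fact k) * INR (fact (n + k)))).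

(* With [z = x^2/4], DLMF 10.8.1 rearranges into
     PI (x/2)^m Y_m(x) = - sum_(k<m) (m-k-1)!/k! z^k + z^m (2 (ln(x/2) + gamma) A - C),
   where A = sum_k (-z)^k / (k! (m+k)!) and C = sum_k (H_k + H_(m+k)) (-z)^k / (k! (m+k)!).
   At x = 4 PI we have z = 4 PI^2 < 40 and 2.3 <= ln(2 PI) + gamma <= 2.5.  For m >= 30 the
   finite sum is at least (m-1)!, while the remaining part is O(m 40^m / m!), so the right-hand
   side is negative.  For m = 2, 4, ..., 28 its sign is certified by fixed-point interval
   arithmetic: both series are cut after 46 terms, beyond which consecutive terms shrink by a
   factor 2, so each tail is bounded by twice the first omitted term. *)

From Stdlib Require Import Reals Lra Lia ZArith Machin List ClassicalEpsilon.
Open Scope R_scope.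

(** * Limits of sequences and series *)

Lemma Rabs_le_between (x c : R) : Rabs x <= c -> - c <= x <= c.
Proof. unfold Rabs; destruct Rcase_abs; lra. Qed.

Lemma Un_cv_const (c : R) : Un_cv (fun _ => c) c.
Proof.
  intros e He; exists O; intros n _.
  unfold R_dist; rewrite Rminus_diag, Rabs_R0; lra.
Qed.

Lemma seq_lim_eq (u : nat -> R) (l : R) : Un_cv u l -> seq_lim u = l.
Proof.
  intros Hl; unfold seq_lim.
  apply UL_sequence with u; [apply epsilon_spec; exists l|]; exact Hl.
Qed.

Lemma series_eq (f : nat -> R) (l : R) : Un_cv (sum_f_R0 f) l -> series f = l.
Proof. exact (seq_lim_eq _ l). Qed.

Lemma Un_cv_le_between (u : nat -> R) (l a b : R) :
  Un_cv u l -> (forall n, a <= u n <= b) -> a <= l <= b.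
Proof.
  intros Hl Hu; split.
  - apply (Rle_cv_lim (fun n => proj1 (Hu n)) (Un_cv_const a) Hl).
  - apply (Rle_cv_lim (fun n => proj2 (Hu n)) Hl (Un_cv_const b)).
Qed.

Section RatioHalf.

Variables (f : nat -> R) (K : nat).
Hypothesis ratio_half : forall k, (K <= k)%nat -> Rabs (f (S k)) <= Rabs (f k) / 2.

(* Telescoping invariant: each new term costs at most the decrease of 2|f|. *)
Lemma sum_f_R0_ratio_half_gap (k p : nat) : (K <= k)%nat ->
  Rabs (sum_f_R0 f (k + p) - sum_f_R0 f k) <= 2 * Rabs (f (S k)) - 2 * Rabs (f (S (k + p))).
Proof.
  intros Hk; induction p as [|p IH].
  - rewrite Nat.add_0_r, Rminus_diag, Rabs_R0; lra.
  - rewrite Nat.add_succ_r; simpl sum_f_R0.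
    replace (sum_f_R0 f (k + p) + f (S (k + p)) - sum_f_R0 f k)
      with ((sum_f_R0 f (k + p) - sum_f_R0 f k) + f (S (k + p))) by ring.
    pose proof (Rabs_triang (sum_f_R0 f (k + p) - sum_f_R0 f k) (f (S (k + p)))).
    pose proof (ratio_half (S (k + p)) ltac:(lia)); lra.
Qed.

Lemma ratio_half_decay (j : nat) : Rabs (f (S (K + j))) <= Rabs (f (S K)) / 2 ^ j.
Proof.
  induction j as [|j IH]; simpl pow.
  - rewrite Nat.add_0_r; lra.
  - rewrite Nat.add_succ_r.
    pose proof (ratio_half (S (K + j)) ltac:(lia)).
    pose proof (pow_lt 2 j ltac:(lra)).
    replace (Rabs (f (S K)) / (2 * 2 ^ j)) with (Rabs (f (S K)) / 2 ^ j / 2) by (field; lra).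
    lra.
Qed.

Lemma ratio_half_cauchy : Cauchy_crit (sum_f_R0 f).
Proof.
  intros e He.
  destruct (cv_pow_half (Rabs (f (S K))) (e / 2) ltac:(lra)) as [N HN].
  assert (gap : forall a b, (K + N <= a <= b)%nat -> R_dist (sum_f_R0 f b) (sum_f_R0 f a) < e).
  { intros a b Hab.
    replace b with (a + (b - a))%nat by lia.
    pose proof (sum_f_R0_ratio_half_gap a (b - a) ltac:(lia)).
    pose proof (Rabs_pos (f (S (a + (b - a))))).
    pose proof (ratio_half_decay (a - K)) as Hd.
    replace (K + (a - K))%nat with a in Hd by lia.
    specialize (HN (a - K)%nat ltac:(lia)); unfold R_dist in *; rewrite Rminus_0_r in HN.
    pose proof (Rle_abs (Rabs (f (S K)) / 2 ^ (a - K))); lra. }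
  exists (K + N)%nat; intros n m Hn Hm.
  destruct (Nat.le_ge_cases n m).
  - rewrite R_dist_sym; apply gap; lia.
  - apply gap; lia.
Qed.

Lemma ratio_half_series_tail :
  exists l, Un_cv (sum_f_R0 f) l /\ Rabs (l - sum_f_R0 f K) <= 2 * Rabs (f (S K)).
Proof.
  destruct (R_complete _ ratio_half_cauchy) as [l Hl].
  exists l; split; [exact Hl|].
  apply Rabs_le.
  enough (- 2 * Rabs (f (S K)) + sum_f_R0 f K <= l <= 2 * Rabs (f (S K)) + sum_f_R0 f K)
    by lra.
  apply (Un_cv_le_between (fun p => sum_f_R0 f (p + K))); [exact (CV_shift' _ K l Hl)|].
  intros p; rewrite Nat.add_comm.
  pose proof (sum_f_R0_ratio_half_gap K p (le_n K)) as Hg.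
  pose proof (Rabs_pos (f (S (K + p)))).
  apply Rabs_le_between in Hg; lra.
Qed.

End RatioHalf.

(** * Logarithm, harmonic numbers and Euler's constant *)

Lemma ln_le (x y : R) : 0 < x -> x <= y -> ln x <= ln y.
Proof.
  intros Hx Hxy; destruct (Rle_lt_or_eq_dec _ _ Hxy) as [Hlt | ->]; [|lra].
  apply Rlt_le, ln_increasing; assumption.
Qed.

Lemma ln_le_sub1 (y : R) : 0 < y -> ln y <= y - 1.
Proof.
  intros Hy; rewrite <- (ln_exp (y - 1)).
  apply ln_le; [exact Hy|]; pose proof (exp_ineq1_le (y - 1)); lra.
Qed.

Lemma ln_ge_1_sub_inv (y : R) : 0 < y -> 1 - / y <= ln y.
Proof.
  intros Hy; pose proof (ln_le_sub1 (/ y) (Rinv_0_lt_compat _ Hy)).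
  rewrite ln_Rinv in * by exact Hy; lra.
Qed.

Lemma ln_div (x y : R) : 0 < x -> 0 < y -> ln (x / y) = ln x - ln y.
Proof.
  intros Hx Hy; unfold Rdiv; rewrite ln_mult, ln_Rinv; try apply Rinv_0_lt_compat; lra.
Qed.

Lemma ln_succ_sub_bounds (a : R) : 0 < a -> / (a + 1) <= ln (a + 1) - ln a <= / a.
Proof.
  intros Ha.
  rewrite <- ln_div by lra.
  assert (Hq : 0 < (a + 1) / a) by (apply Rdiv_lt_0_compat; lra).
  pose proof (ln_le_sub1 _ Hq); pose proof (ln_ge_1_sub_inv _ Hq).
  replace (/ (a + 1)) with (1 - / ((a + 1) / a)) by (field; lra).
  replace (/ a) with ((a + 1) / a - 1) by (field; lra).
  lra.
Qed.

Lemma harmonic_S (j : nat) : harmonic (S j) = harmonic j + / INR (S j).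
Proof. destruct j; [simpl; lra | reflexivity]. Qed.

Lemma inv_INR_S_bounds (j : nat) : 0 < / INR (S j) <= 1.
Proof.
  assert (1 <= INR (S j)) by (apply (le_INR 1); lia).
  split; [apply Rinv_0_lt_compat; lra|].
  rewrite <- Rinv_1; apply Rinv_le_contravar; lra.
Qed.

Lemma harmonic_ge0 (j : nat) : 0 <= harmonic j.
Proof.
  induction j as [|j IH]; [simpl; lra|].
  rewrite harmonic_S; pose proof (inv_INR_S_bounds j); lra.
Qed.

Lemma harmonic_ge1 (j : nat) : (1 <= j)%nat -> 1 <= harmonic j.
Proof.
  induction 1 as [|j _ IH]; [simpl; lra|].
  rewrite harmonic_S; pose proof (inv_INR_S_bounds j); lra.
Qed.

Lemma harmonic_S_le (j : nat) : harmonic (S j) <= harmonic j + 1.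
Proof. rewrite harmonic_S; pose proof (inv_INR_S_bounds j); lra. Qed.

Lemma harmonic_le (j : nat) : harmonic j <= INR j.
Proof.
  induction j as [|j IH]; [simpl; lra|].
  pose proof (harmonic_S_le j); rewrite S_INR; lra.
Qed.

(* Both sequences are shifted by one so that [ln] is only taken at positive integers. *)
Definition euler_upper (n : nat) : R := harmonic (S n) - ln (INR (S n)).
Definition euler_lower (n : nat) : R := harmonic (S n) - ln (INR (S (S n))).

Lemma euler_upper_decreasing : Un_decreasing euler_upper.
Proof.
  intros n; unfold euler_upper; rewrite harmonic_S, (S_INR (S n)).
  pose proof (ln_succ_sub_bounds (INR (S n)) (lt_0_INR _ (Nat.lt_0_succ n))).
  rewrite <- S_INR in *; lra.
Qed.

Lemma euler_lower_growing : Un_growing euler_lower.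
Proof.
  intros n; unfold euler_lower; rewrite (harmonic_S (S n)), (S_INR (S (S n))).
  pose proof (ln_succ_sub_bounds (INR (S (S n))) (lt_0_INR _ (Nat.lt_0_succ _))).
  rewrite <- S_INR in *; lra.
Qed.

Lemma euler_lower_le_upper (n : nat) : euler_lower n <= euler_upper n.
Proof.
  unfold euler_lower, euler_upper.
  pose proof (ln_increasing (INR (S n)) (INR (S (S n))) (lt_0_INR _ (Nat.lt_0_succ n))
    (lt_INR _ _ (Nat.lt_succ_diag_r _))); lra.
Qed.

Lemma euler_gamma_bounds (N : nat) : euler_lower N <= euler_gamma <= euler_upper N.
Proof.
  assert (Hlb : has_lb euler_upper).
  { exists (- euler_lower 0); intros y [n ->]; unfold opp_seq.
    pose proof (growing_prop _ n 0 euler_lower_growing (Nat.le_0_l n)).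
    pose proof (euler_lower_le_upper n); lra. }
  destruct (decreasing_cv _ euler_upper_decreasing Hlb) as [g Hg].
  assert (Hgamma : euler_gamma = g).
  { apply seq_lim_eq, (CV_shift _ 1), (Un_cv_ext euler_upper); [|exact Hg].
    intros n; unfold euler_upper; rewrite Nat.add_1_r; reflexivity. }
  rewrite Hgamma.
  apply (Un_cv_le_between _ _ _ _ (CV_shift' _ N g Hg)); intros p.
  pose proof (decreasing_prop _ N (p + N) euler_upper_decreasing ltac:(lia)).
  pose proof (growing_prop _ (p + N) N euler_lower_growing ltac:(lia)).
  pose proof (euler_lower_le_upper (p + N)); lra.
Qed.

(** * The series expansion of [Y_m] *)

Definition bessel_term (m : nat) (x : R) (k : nat) : R :=
  (- (x ^ 2 / 4)) ^ k / (INR (fact k) * INR (fact (m + k))).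

Definition bessel_log_term (m : nat) (x : R) (k : nat) : R :=
  (harmonic k + harmonic (m + k)) * bessel_term m x k.

Definition bessel_finite_term (m : nat) (x : R) (k : nat) : R :=
  INR (fact (m - k - 1)) / INR (fact k) * (x ^ 2 / 4) ^ k.

Definition bessel_finite_sum (m : nat) (x : R) : R := fin_sum (bessel_finite_term m x) m.

Definition bessel_sums_cv (m : nat) (x A C : R) : Prop :=
  Un_cv (sum_f_R0 (bessel_term m x)) A /\ Un_cv (sum_f_R0 (bessel_log_term m x)) C.

Definition bessel_expansion (m : nat) (x L A C : R) : R :=
  - bessel_finite_sum m x + (x ^ 2 / 4) ^ m * (2 * L * A - C).

(* [digamma_succ k = H_k - gamma] splits the last series of [BesselY] into [C] minus a
   multiple of [A], and the multiple of [A] combines with the [ln] term. *)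
Lemma BesselY_expansion (m : nat) (x A C : R) : 0 < x -> bessel_sums_cv m x A C ->
  PI * (x / 2) ^ m * BesselY m x = bessel_expansion m x (ln (x / 2) + euler_gamma) A C.
Proof.
  intros Hx [HA HC].
  assert (HB : Un_cv (sum_f_R0 (fun k => (digamma_succ k + digamma_succ (m + k)) *
                 (- (x ^ 2 / 4)) ^ k / (INR (fact k) * INR (fact (m + k)))))
                 (- 2 * euler_gamma * A + C)).
  { apply (Un_cv_ext (fun N => - 2 * euler_gamma * sum_f_R0 (bessel_term m x) N
                               + sum_f_R0 (bessel_log_term m x) N)).
    - intros N; rewrite scal_sum, <- plus_sum; apply sum_eq; intros k _.
      unfold digamma_succ, bessel_log_term, bessel_term.
      field; split; apply INR_fact_neq_0.
    - apply CV_plus; [apply CV_mult; [apply Un_cv_const|]|]; assumption. }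
  unfold BesselY, BesselJ, bessel_expansion, bessel_finite_sum, bessel_finite_term.
  fold (bessel_term m x); rewrite (series_eq _ _ HA), (series_eq _ _ HB).
  assert ((x / 2) ^ m <> 0) by (apply pow_nonzero; lra).
  replace ((x ^ 2 / 4) ^ m) with ((x / 2) ^ m * (x / 2) ^ m)
    by (rewrite <- Rpow_mult_distr; f_equal; field).
  pose proof PI_RGT_0; field; split; lra.
Qed.

Lemma bessel_term_S (m : nat) (x : R) (k : nat) :
  bessel_term m x (S k) = - (bessel_term m x k * (x ^ 2 / 4) / (INR (S k) * INR (S (m + k)))).
Proof.
  unfold bessel_term; rewrite Nat.add_succ_r, !fact_simpl, !mult_INR; simpl pow.
  pose proof (INR_fact_neq_0 k); pose proof (INR_fact_neq_0 (m + k)).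
  pose proof (not_0_INR (S k) (Nat.neq_succ_0 _)).
  pose proof (not_0_INR (S (m + k)) (Nat.neq_succ_0 _)).
  field; auto.
Qed.

Lemma bessel_term_abs_S (m : nat) (x : R) (k : nat) :
  Rabs (bessel_term m x (S k))
  = Rabs (bessel_term m x k) * ((x ^ 2 / 4) / (INR (S k) * INR (S (m + k)))).
Proof.
  assert (0 < INR (S k) * INR (S (m + k))) by (apply Rmult_lt_0_compat; apply lt_0_INR; lia).
  assert (0 <= (x ^ 2 / 4) / (INR (S k) * INR (S (m + k))))
    by (apply Rmult_le_pos; [pose proof (pow2_ge_0 x); lra | apply Rlt_le, Rinv_0_lt_compat; lra]).
  rewrite bessel_term_S, Rabs_Ropp,
    <- (Rabs_right ((x ^ 2 / 4) / (INR (S k) * INR (S (m + k))))) by lra.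
  rewrite <- Rabs_mult; f_equal; unfold Rdiv; ring.
Qed.

Lemma bessel_term_ratio (m : nat) (x : R) (k : nat) (r : R) :
  r * (x ^ 2 / 4) <= INR (S k) * INR (S (m + k)) -> 0 < r ->
  Rabs (bessel_term m x (S k)) <= Rabs (bessel_term m x k) / r.
Proof.
  intros Hd Hr; rewrite bessel_term_abs_S.
  assert (HD : 0 < INR (S k) * INR (S (m + k))) by (apply Rmult_lt_0_compat; apply lt_0_INR; lia).
  set (D := INR (S k) * INR (S (m + k))) in *; set (z := x ^ 2 / 4) in *.
  assert (z / D <= / r).
  { apply (Rmult_le_reg_l (r * D)); [nra|].
    replace (r * D * (z / D)) with (r * z) by (field; lra).
    replace (r * D * / r) with D by (field; lra); lra. }
  pose proof (Rabs_pos (bessel_term m x k)).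
  unfold Rdiv at 2; apply Rmult_le_compat_l; assumption.
Qed.

(* As [H_{m+k} >= 1], the harmonic factor at most triples from [k] to [k+1], so the ratio 1/6
   of consecutive [bessel_term]s yields the ratio 1/2 here. *)
Lemma bessel_log_term_ratio (m : nat) (x : R) (k : nat) : (1 <= m)%nat ->
  6 * (x ^ 2 / 4) <= INR (S k) * INR (S (m + k)) ->
  Rabs (bessel_log_term m x (S k)) <= Rabs (bessel_log_term m x k) / 2.
Proof.
  intros Hm Hd; unfold bessel_log_term; rewrite Nat.add_succ_r.
  pose proof (harmonic_ge0 k); pose proof (harmonic_S_le k).
  pose proof (harmonic_ge1 (m + k) ltac:(lia)); pose proof (harmonic_S_le (m + k)).
  pose proof (harmonic_ge0 (S k)); pose proof (harmonic_ge0 (S (m + k))).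
  rewrite !Rabs_mult, (Rabs_right (harmonic k + _)), (Rabs_right (harmonic (S k) + _)) by lra.
  pose proof (bessel_term_ratio m x k 6 Hd ltac:(lra)).
  pose proof (Rabs_pos (bessel_term m x (S k))).
  assert ((harmonic (S k) + harmonic (S (m + k))) * Rabs (bessel_term m x (S k))
          <= 3 * (harmonic k + harmonic (m + k)) * Rabs (bessel_term m x (S k)))
    by (apply Rmult_le_compat_r; lra).
  assert (3 * (harmonic k + harmonic (m + k)) * Rabs (bessel_term m x (S k))
          <= 3 * (harmonic k + harmonic (m + k)) * (Rabs (bessel_term m x k) / 6))
    by (apply Rmult_le_compat_l; lra).
  lra.
Qed.

Lemma bessel_series_tails (m : nat) (x : R) (K : nat) : (1 <= m)%nat ->
  6 * (x ^ 2 / 4) <= INR (S K) * INR (S (m + K)) ->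
  exists A C, bessel_sums_cv m x A C /\
    Rabs (A - sum_f_R0 (bessel_term m x) K) <= 2 * Rabs (bessel_term m x (S K)) /\
    Rabs (C - sum_f_R0 (bessel_log_term m x) K) <= 2 * Rabs (bessel_log_term m x (S K)).
Proof.
  intros Hm HK.
  assert (Hk : forall k, (K <= k)%nat -> 6 * (x ^ 2 / 4) <= INR (S k) * INR (S (m + k))).
  { intros k Hk.
    assert (INR (S K) <= INR (S k)) by (apply le_INR; lia).
    assert (INR (S (m + K)) <= INR (S (m + k))) by (apply le_INR; lia).
    pose proof (pos_INR (S K)); pose proof (pos_INR (S (m + K))); nra. }
  destruct (ratio_half_series_tail (bessel_term m x) K) as (A & HA & HtA).
  { intros k Hkk; apply bessel_term_ratio; [|lra].
    pose proof (Hk k Hkk); pose proof (pow2_ge_0 x); lra. }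
  destruct (ratio_half_series_tail (bessel_log_term m x) K) as (C & HC & HtC).
  { intros k Hkk; apply bessel_log_term_ratio; auto. }
  exists A, C; repeat split; assumption.
Qed.

Lemma bessel_finite_term_S (m : nat) (x : R) (k : nat) : (S k < m)%nat ->
  bessel_finite_term m x (S k)
  = bessel_finite_term m x k * (x ^ 2 / 4) / (INR (S k) * INR (m - k - 1)).
Proof.
  intros Hk; unfold bessel_finite_term.
  replace (m - k - 1)%nat with (S (m - S k - 1)) by lia.
  rewrite !fact_simpl, !mult_INR; simpl pow.
  pose proof (INR_fact_neq_0 (m - S k - 1)); pose proof (INR_fact_neq_0 k).
  pose proof (not_0_INR (S (m - S k - 1)) (Nat.neq_succ_0 _)).
  pose proof (not_0_INR (S k) (Nat.neq_succ_0 _)).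
  field; auto.
Qed.

(** * Fixed-point interval arithmetic *)

Lemma Rmult_between_corners (a1 a2 c1 c2 X Y lo hi : R) :
  a1 <= X <= a2 -> c1 <= Y <= c2 ->
  lo <= a1 * c1 <= hi -> lo <= a1 * c2 <= hi -> lo <= a2 * c1 <= hi -> lo <= a2 * c2 <= hi ->
  lo <= X * Y <= hi.
Proof.
  intros [] [] [] [] [] [].
  destruct (Rle_dec 0 Y), (Rle_dec 0 a1), (Rle_dec 0 a2); split; nra.
Qed.

Definition scale : Z := Eval compute in (2 ^ 40)%Z.

Definition ival : Type := (Z * Z)%type.

Definition encl (a : ival) (x : R) : Prop := IZR (fst a) <= x * IZR scale <= IZR (snd a).

Definition iadd (a b : ival) : ival := (fst a + fst b, snd a + snd b)%Z.
Definition iopp (a : ival) : ival := (- snd a, - fst a)%Z.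
Definition iconst (n : Z) : ival := (n * scale, n * scale)%Z.
(* [Z.div] rounds down, so [- (- hi / d)] rounds up. *)
Definition idiv (a : ival) (d : Z) : ival := (fst a / d, - (- snd a / d))%Z.
(* The corner products are at scale [scale^2] and are divided back with outward rounding. *)
Definition imul (a b : ival) : ival :=
  let '(a1, a2) := a in let '(b1, b2) := b in
  idiv (Z.min (Z.min (a1 * b1) (a1 * b2)) (Z.min (a2 * b1) (a2 * b2)),
        Z.max (Z.max (a1 * b1) (a1 * b2)) (Z.max (a2 * b1) (a2 * b2)))%Z scale.
Definition imag (a : ival) : Z := Z.max (Z.abs (fst a)) (Z.abs (snd a)).
Definition iwiden (a : ival) (r : Z) : ival := (fst a - 2 * r, snd a + 2 * r)%Z.
Definition iapart0 (a : ival) : bool := (snd a <? 0)%Z || (0 <? fst a)%Z.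

Lemma scale_pos : 0 < IZR scale.
Proof. apply IZR_lt; reflexivity. Qed.

Lemma encl_add (a b : ival) (x y : R) : encl a x -> encl b y -> encl (iadd a b) (x + y).
Proof. unfold encl, iadd; simpl; rewrite !plus_IZR; lra. Qed.

Lemma encl_opp (a : ival) (x : R) : encl a x -> encl (iopp a) (- x).
Proof. unfold encl, iopp; simpl; rewrite !opp_IZR; lra. Qed.

Lemma encl_const (n : Z) : encl (iconst n) (IZR n).
Proof. unfold encl, iconst; simpl; rewrite mult_IZR; lra. Qed.

Lemma encl_div (a : ival) (d : Z) (x : R) : (0 < d)%Z -> encl a x -> encl (idiv a d) (x / IZR d).
Proof.
  intros Hd [Hlo Hhi]; unfold idiv, encl; simpl.
  assert (Hd' : 0 < IZR d) by (apply IZR_lt; exact Hd).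
  assert (Hfloor : IZR (fst a / d) * IZR d <= IZR (fst a)).
  { rewrite <- mult_IZR; apply IZR_le; rewrite Z.mul_comm; apply Z.mul_div_le, Hd. }
  assert (Hceil : IZR (snd a) <= IZR (- (- snd a / d)) * IZR d).
  { rewrite <- mult_IZR; apply IZR_le; pose proof (Z.mul_div_le (- snd a) d Hd); lia. }
  split; apply (Rmult_le_reg_r (IZR d)); try exact Hd';
    replace (x / IZR d * IZR scale * IZR d) with (x * IZR scale) by (field; lra); lra.
Qed.

Lemma encl_mul (a b : ival) (x y : R) : encl a x -> encl b y -> encl (imul a b) (x * y).
Proof.
  destruct a as [a1 a2], b as [b1 b2]; intros Ha Hb; unfold imul.
  pose proof scale_pos.
  replace (x * y) with (x * y * IZR scale / IZR scale) by (field; lra).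
  apply encl_div; [reflexivity|]; unfold encl in *; simpl in *.
  replace (x * y * IZR scale * IZR scale) with ((x * IZR scale) * (y * IZR scale)) by ring.
  apply (Rmult_between_corners _ _ _ _ _ _ _ _ Ha Hb);
    rewrite <- mult_IZR; split; apply IZR_le; lia.
Qed.

Lemma encl_abs_le_imag (a : ival) (x : R) : encl a x -> Rabs x * IZR scale <= IZR (imag a).
Proof.
  intros [Hlo Hhi]; pose proof scale_pos.
  assert (IZR (Z.abs (fst a)) <= IZR (imag a) /\ IZR (Z.abs (snd a)) <= IZR (imag a))
    as [H1 H2] by (unfold imag; split; apply IZR_le; lia).
  rewrite !abs_IZR in *.
  rewrite <- (Rabs_right (IZR scale)), <- Rabs_mult by lra.
  apply Rabs_le; pose proof (Rle_abs (IZR (fst a))); pose proof (Rle_abs (- IZR (fst a))).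
  pose proof (Rle_abs (IZR (snd a))); pose proof (Rle_abs (- IZR (snd a))).
  rewrite !Rabs_Ropp in *; lra.
Qed.

Lemma encl_widen (a w : ival) (x y u : R) :
  encl a y -> encl w u -> Rabs (x - y) <= 2 * Rabs u -> encl (iwiden a (imag w)) x.
Proof.
  intros [Hlo Hhi] Hw Hxy; pose proof (encl_abs_le_imag _ _ Hw); pose proof scale_pos.
  apply Rabs_le_between in Hxy.
  unfold iwiden, encl; cbn [fst snd]; rewrite minus_IZR, plus_IZR, mult_IZR.
  split; nra.
Qed.

Lemma encl_apart0 (a : ival) (x : R) : encl a x -> iapart0 a = true -> x <> 0.
Proof.
  intros [Hlo Hhi] Ha ->; rewrite Rmult_0_l in *.
  unfold iapart0 in Ha; apply Bool.orb_true_iff in Ha as [Ha | Ha];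
    apply Z.ltb_lt, IZR_lt in Ha; lra.
Qed.

Fixpoint iter_from {T : Type} (step : nat -> T -> T) (fuel k : nat) (s : T) : T :=
  match fuel with
  | O => s
  | S f => iter_from step f (S k) (step k s)
  end.

Lemma iter_from_invariant {T : Type} (P : nat -> T -> Prop) (step : nat -> T -> T) :
  (forall k s, P k s -> P (S k) (step k s)) ->
  forall fuel k s, P k s -> P (k + fuel)%nat (iter_from step fuel k s).
Proof.
  intros Hstep fuel; induction fuel as [|fuel IH]; intros k s Hs; simpl.
  - rewrite Nat.add_0_r; exact Hs.
  - rewrite Nat.add_succ_r; exact (IH _ _ (Hstep k s Hs)).
Qed.

Fixpoint Zfact (n : nat) : Z :=
  match n with
  | O => 1%Z
  | S p => (Z.of_nat (S p) * Zfact p)%Z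
  end.

Lemma Zfact_IZR (n : nat) : IZR (Zfact n) = INR (fact n).
Proof.
  induction n as [|n IH]; [reflexivity|].
  cbn [Zfact]; rewrite mult_IZR, IH, <- INR_IZR_INZ, fact_simpl, mult_INR; reflexivity.
Qed.

Lemma fin_sum_S (f : nat -> R) (k : nat) : fin_sum f (S k) = fin_sum f k + f k.
Proof. destruct k; simpl; [ring | reflexivity]. Qed.

Lemma encl_div_nat (a : ival) (d : nat) (x : R) :
  (0 < d)%nat -> encl a x -> encl (idiv a (Z.of_nat d)) (x / INR d).
Proof. intros Hd Ha; rewrite INR_IZR_INZ; apply encl_div; [lia | exact Ha]. Qed.

Definition iinv_nat (d : nat) : ival := idiv (iconst 1) (Z.of_nat d).

Lemma encl_inv_nat (d : nat) : (0 < d)%nat -> encl (iinv_nat d) (/ INR d).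
Proof.
  intros Hd; replace (/ INR d) with (IZR 1 / INR d) by (simpl; field; apply not_0_INR; lia).
  apply encl_div_nat, encl_const; exact Hd.
Qed.

Section Evaluation.

Variables (m : nat) (x : R) (z : ival).
Hypothesis z_encl : encl z (x ^ 2 / 4).

Definition finite_sum_step (k : nat) (ts : ival * ival) : ival * ival :=
  let t := idiv (imul (fst ts) z) (Z.of_nat (S k * (m - k - 1))) in (t, iadd (snd ts) t).

Definition finite_sum_ival : ival :=
  let t0 := iconst (Zfact (m - 1)) in snd (iter_from finite_sum_step (m - 1) 0 (t0, t0)).

Lemma encl_finite_sum : (1 <= m)%nat -> encl finite_sum_ival (bessel_finite_sum m x).
Proof.
  intros Hm.
  set (P k ts := (k < m)%nat -> encl (fst ts) (bessel_finite_term m x k) /\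
                                encl (snd ts) (fin_sum (bessel_finite_term m x) (S k))).
  assert (Hstep : forall k ts, P k ts -> P (S k) (finite_sum_step k ts)).
  { intros k [t s] Hts Hk; destruct (Hts ltac:(lia)) as [Ht Hs]; simpl fst in *; simpl snd in *.
    assert (Ht' : encl (idiv (imul t z) (Z.of_nat (S k * (m - k - 1))))
                       (bessel_finite_term m x (S k))).
    { rewrite bessel_finite_term_S, <- mult_INR by exact Hk.
      apply encl_div_nat; [apply Nat.mul_pos_pos; lia | apply encl_mul; assumption]. }
    split; [exact Ht' | rewrite fin_sum_S; apply encl_add; assumption]. }
  assert (H0 : encl (iconst (Zfact (m - 1))) (bessel_finite_term m x 0)).
  { replace (bessel_finite_term m x 0) with (IZR (Zfact (m - 1))); [apply encl_const|].
    unfold bessel_finite_term; rewrite Zfact_IZR, Nat.sub_0_r; simpl; field. }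
  destruct (iter_from_invariant P _ Hstep (m - 1) 0 (_, _) (fun _ => conj H0 H0)) as [_ Hs];
    [lia|].
  replace (S (0 + (m - 1))) with m in Hs by lia; exact Hs.
Qed.

Definition pow_fact_step (j : nat) (b : ival) : ival := idiv (imul b z) (Z.of_nat (S j)).

Lemma encl_pow_fact (n : nat) :
  encl (iter_from pow_fact_step n 0 (iconst 1)) ((x ^ 2 / 4) ^ n / INR (fact n)).
Proof.
  apply (iter_from_invariant (fun j b => encl b ((x ^ 2 / 4) ^ j / INR (fact j)))).
  - intros j b Hb; unfold pow_fact_step.
    replace ((x ^ 2 / 4) ^ S j / INR (fact (S j)))
      with ((x ^ 2 / 4) ^ j / INR (fact j) * (x ^ 2 / 4) / INR (S j)).
    + apply encl_div_nat; [lia | apply encl_mul; assumption].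
    + rewrite fact_simpl, mult_INR; simpl pow.
      pose proof (INR_fact_neq_0 j); pose proof (not_0_INR (S j) (Nat.neq_succ_0 _)).
      field; auto.
  - replace ((x ^ 2 / 4) ^ 0 / INR (fact 0)) with (IZR 1) by (simpl; field).
    apply encl_const.
Qed.

End Evaluation.

Definition harmonic_step (j : nat) (h : ival) : ival := iadd h (iinv_nat (S j)).

Lemma encl_harmonic (n : nat) : encl (iter_from harmonic_step n 0 (0, 0)%Z) (harmonic n).
Proof.
  apply (iter_from_invariant (fun j h => encl h (harmonic j))).
  - intros j h Hh; rewrite harmonic_S; apply encl_add; [exact Hh | apply encl_inv_nat; lia].
  - unfold encl; simpl; lra.
Qed.

(* Terms and partial sums are carried multiplied by [z^m], which keeps them of moderate size
   for fixed-point arithmetic; [st_hk] and [st_hmk] carry [H_k] and [H_{m+k}]. *)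
Record series_state : Type := SeriesState
  { st_term : ival; st_hk : ival; st_hmk : ival; st_sum : ival; st_log_sum : ival }.

Definition series_step (m : nat) (z : ival) (k : nat) (st : series_state) : series_state :=
  let '(SeriesState t hk hmk sa sc) := st in
  SeriesState (iopp (idiv (imul t z) (Z.of_nat (S k * S (m + k)))))
              (iadd hk (iinv_nat (S k))) (iadd hmk (iinv_nat (S (m + k))))
              (iadd sa t) (iadd sc (imul t (iadd hk hmk))).

Definition series_state_encl (m : nat) (x : R) (k : nat) (st : series_state) : Prop :=
  encl (st_term st) (bessel_term m x k * (x ^ 2 / 4) ^ m) /\
  encl (st_hk st) (harmonic k) /\ encl (st_hmk st) (harmonic (m + k)) /\
  encl (st_sum st) (fin_sum (fun j => bessel_term m x j * (x ^ 2 / 4) ^ m) k) /\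
  encl (st_log_sum st) (fin_sum (fun j => bessel_log_term m x j * (x ^ 2 / 4) ^ m) k).

Lemma series_step_encl (m : nat) (x : R) (z : ival) (k : nat) (st : series_state) :
  encl z (x ^ 2 / 4) -> series_state_encl m x k st ->
  series_state_encl m x (S k) (series_step m z k st).
Proof.
  intros Hz; destruct st as [t hk hmk sa sc]; intros (Ht & Hk & Hmk & Hsa & Hsc).
  unfold series_state_encl; cbn [series_step st_term st_hk st_hmk st_sum st_log_sum].
  assert (Hlog : encl (imul t (iadd hk hmk)) (bessel_log_term m x k * (x ^ 2 / 4) ^ m)).
  { replace (bessel_log_term m x k * _)
      with (bessel_term m x k * (x ^ 2 / 4) ^ m * (harmonic k + harmonic (m + k)))
      by (unfold bessel_log_term; ring).
    apply encl_mul, encl_add; assumption. }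
  split; [|split; [|split; [|split]]].
  - replace (bessel_term m x (S k) * (x ^ 2 / 4) ^ m)
      with (- (bessel_term m x k * (x ^ 2 / 4) ^ m * (x ^ 2 / 4) / INR (S k * S (m + k))))
      by (rewrite bessel_term_S, mult_INR; field; split; apply not_0_INR; lia).
    apply encl_opp, encl_div_nat; [lia | apply encl_mul; assumption].
  - rewrite harmonic_S; apply encl_add; [exact Hk | apply encl_inv_nat; lia].
  - rewrite Nat.add_succ_r, harmonic_S; apply encl_add; [exact Hmk | apply encl_inv_nat; lia].
  - rewrite fin_sum_S; apply encl_add; assumption.
  - rewrite fin_sum_S; apply encl_add; assumption.
Qed.

Definition tail_index : nat := 45.

Definition expansion_ival (m : nat) (z l : ival) : ival :=
  let init := SeriesState (iter_from (pow_fact_step z) m 0 (iconst 1)) (0, 0)%Z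
                          (iter_from harmonic_step m 0 (0, 0)%Z) (0, 0)%Z (0, 0)%Z in
  let st := iter_from (series_step m z) (S tail_index) 0 init in
  iadd (iopp (finite_sum_ival m z))
       (iadd (imul (imul l (iconst 2)) (iwiden (st_sum st) (imag (st_term st))))
             (iopp (iwiden (st_log_sum st)
                           (imag (imul (st_term st) (iadd (st_hk st) (st_hmk st))))))).

Lemma encl_scaled_lim (f : nat -> R) (l c : R) (K : nat) (s w : ival) :
  0 <= c -> Rabs (l - sum_f_R0 f K) <= 2 * Rabs (f (S K)) ->
  encl s (fin_sum (fun j => f j * c) (S K)) -> encl w (f (S K) * c) ->
  encl (iwiden s (imag w)) (l * c).
Proof.
  intros Hc Htail Hs Hw; apply (encl_widen _ _ _ _ _ Hs Hw).
  cbn [fin_sum]; rewrite <- scal_sum.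
  replace (l * c - c * sum_f_R0 f K) with ((l - sum_f_R0 f K) * c) by ring.
  rewrite !Rabs_mult, (Rabs_right c) by lra.
  apply Rmult_le_compat_r with (r := c) in Htail; lra.
Qed.

Lemma encl_expansion (m : nat) (x L : R) (z l : ival) :
  (1 <= m)%nat -> x ^ 2 / 4 <= 40 -> encl z (x ^ 2 / 4) -> encl l L ->
  exists A C, bessel_sums_cv m x A C /\ encl (expansion_ival m z l) (bessel_expansion m x L A C).
Proof.
  intros Hm Hx Hz Hl.
  destruct (bessel_series_tails m x tail_index Hm) as (A & C & Hcv & HtA & HtC).
  { assert (46 <= INR (S tail_index)) by (simpl; lra).
    assert (46 <= INR (S (m + tail_index)))
      by (replace 46 with (INR 46) by (simpl; lra); apply le_INR; unfold tail_index; lia).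
    nra. }
  exists A, C; split; [exact Hcv|].
  assert (Hinit : series_state_encl m x 0
            (SeriesState (iter_from (pow_fact_step z) m 0 (iconst 1)) (0, 0)%Z
                         (iter_from harmonic_step m 0 (0, 0)%Z) (0, 0)%Z (0, 0)%Z)).
  { unfold series_state_encl; cbn [st_term st_hk st_hmk st_sum st_log_sum fin_sum].
    replace (bessel_term m x 0 * (x ^ 2 / 4) ^ m) with ((x ^ 2 / 4) ^ m / INR (fact m))
      by (unfold bessel_term; rewrite Nat.add_0_r; simpl; field; apply INR_fact_neq_0).
    rewrite Nat.add_0_r.
    split; [apply encl_pow_fact; exact Hz|].
    split; [unfold encl; simpl; lra|].
    split; [apply encl_harmonic|].
    unfold encl; simpl; lra. }
  pose proof (iter_from_invariant _ _ (fun k st => series_step_encl m x z k st Hz)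
                (S tail_index) 0 _ Hinit) as (Ht & Hk & Hmk & Hsa & Hsc).
  unfold expansion_ival.
  set (st := iter_from (series_step m z) (S tail_index) 0 _) in *.
  assert (Hzm : 0 <= (x ^ 2 / 4) ^ m) by (apply pow_le; pose proof (pow2_ge_0 x); lra).
  replace (bessel_expansion m x L A C)
    with (- bessel_finite_sum m x + (L * IZR 2 * (A * (x ^ 2 / 4) ^ m) + - (C * (x ^ 2 / 4) ^ m)))
    by (unfold bessel_expansion; simpl; ring).
  apply encl_add; [apply encl_opp, encl_finite_sum; assumption|].
  apply encl_add;
    [apply encl_mul; [apply encl_mul; [exact Hl | apply encl_const]|] | apply encl_opp];
    eapply encl_scaled_lim; eauto.
  replace (bessel_log_term m x (S tail_index) * (x ^ 2 / 4) ^ m)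
    with (bessel_term m x (S tail_index) * (x ^ 2 / 4) ^ m
          * (harmonic (S tail_index) + harmonic (m + S tail_index)))
    by (unfold bessel_log_term; ring).
  apply encl_mul, encl_add; assumption.
Qed.

(* The floor and ceiling of [PI * scale]. *)
Definition PI_ival : ival := (3454217652357, 3454217652358)%Z.

Lemma encl_PI : encl PI_ival PI.
Proof.
  pose proof (PI_2_3_7_ineq 6) as H.
  unfold tg_alt, PI_2_3_7_tg, Ratan_seq in H; simpl in H.
  unfold encl, scale; simpl; lra.
Qed.

Lemma PI_bounds : 314 / 100 <= PI <= 315 / 100.
Proof. pose proof encl_PI as H; unfold encl, scale in H; simpl in H; lra. Qed.

Definition z_ival : ival := imul (imul PI_ival PI_ival) (iconst 4).

Lemma encl_z : encl z_ival ((4 * PI) ^ 2 / 4).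
Proof.
  replace ((4 * PI) ^ 2 / 4) with (PI * PI * IZR 4) by (simpl; field).
  apply encl_mul; [apply encl_mul; apply encl_PI | apply encl_const].
Qed.

Definition L_ival : ival := Eval compute in (23 * scale / 10, 25 * scale / 10)%Z.

Lemma encl_L (L : R) : 23 / 10 <= L <= 25 / 10 -> encl L_ival L.
Proof. unfold encl, scale; simpl; lra. Qed.

(* [gamma] is squeezed between [H_6 - ln 7] and [H_6 - ln 6]; as [2 PI / 7] and [2 PI / 6] are close
   to 1, the bounds [1 - 1/y <= ln y <= y - 1] are accurate enough. *)
Lemma log_term_bounds : 23 / 10 <= ln (4 * PI / 2) + euler_gamma <= 25 / 10.
Proof.
  pose proof PI_bounds.
  destruct (euler_gamma_bounds 5) as [Hlo Hhi]; unfold euler_lower, euler_upper in *.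
  replace (harmonic 6) with (49 / 20) in * by (unfold harmonic; simpl; field).
  replace (INR 6) with 6 in * by (simpl; ring); replace (INR 7) with 7 in * by (simpl; ring).
  replace (4 * PI / 2) with (2 * PI) by field.
  pose proof (ln_ge_1_sub_inv (2 * PI / 7) ltac:(lra)).
  pose proof (ln_le_sub1 (2 * PI / 6) ltac:(lra)).
  rewrite ln_div in * by lra.
  replace (/ (2 * PI / 7)) with (7 / (2 * PI)) in * by (field; lra).
  assert (7 / (2 * PI) <= 7 / (2 * (314 / 100))).
  { unfold Rdiv; apply Rmult_le_compat_l; [lra|]; apply Rinv_le_contravar; lra. }
  lra.
Qed.

(** * Large orders *)

Lemma bessel_term_abs_le (m : nat) (x : R) (k : nat) : x ^ 2 / 4 <= 40 ->
  Rabs (bessel_term m x k) <= 40 ^ k / INR (fact k) / INR (fact m).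
Proof.
  intros Hx; unfold bessel_term.
  assert (Hz : 0 <= x ^ 2 / 4) by (pose proof (pow2_ge_0 x); lra).
  pose proof (INR_fact_lt_0 k); pose proof (INR_fact_lt_0 m).
  assert (INR (fact m) <= INR (fact (m + k))) by (apply le_INR, fact_le; lia).
  set (z := x ^ 2 / 4) in *; unfold Rdiv.
  rewrite Rabs_mult, Rabs_inv, <- RPow_abs, Rabs_Ropp, (Rabs_right z), (Rabs_right (_ * _)) by nra.
  rewrite Rmult_assoc, <- Rinv_mult.
  apply Rmult_le_compat; [apply pow_le; lra | apply Rlt_le, Rinv_0_lt_compat; nra
                         | apply pow_incr; lra | apply Rinv_le_contravar; nra].
Qed.

Lemma bessel_log_term_abs_le (m : nat) (x : R) (k : nat) : x ^ 2 / 4 <= 40 -> (k <= 8)%nat ->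
  Rabs (bessel_log_term m x k) <= (INR m + 16) * (40 ^ k / INR (fact k) / INR (fact m)).
Proof.
  intros Hx Hk; unfold bessel_log_term.
  pose proof (harmonic_ge0 k); pose proof (harmonic_ge0 (m + k)).
  pose proof (harmonic_le k); pose proof (harmonic_le (m + k)).
  assert (INR k <= 8) by (replace 8 with (INR 8) by (simpl; ring); apply le_INR; exact Hk).
  rewrite plus_INR in *; rewrite Rabs_mult, Rabs_right by lra.
  apply Rmult_le_compat; [lra | apply Rabs_pos | lra | apply bessel_term_abs_le; exact Hx].
Qed.

Lemma exp40_partial_sum_le : sum_f_R0 (fun k => 40 ^ k / INR (fact k)) 8 <= 3 * 10 ^ 8.
Proof.
  rewrite (sum_eq _ (fun k => 40 ^ k / IZR (Zfact k))) by (intros; rewrite Zfact_IZR; reflexivity).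
  simpl; lra.
Qed.

Lemma Rabs_lim_le_of_tail (f : nat -> R) (l : R) (K : nat) :
  Rabs (l - sum_f_R0 f K) <= 2 * Rabs (f (S K)) ->
  Rabs l <= 2 * sum_f_R0 (fun k => Rabs (f k)) (S K).
Proof.
  intros Htail.
  pose proof (Rabs_triang (l - sum_f_R0 f K) (sum_f_R0 f K)).
  replace (l - _ + _) with l in * by ring.
  pose proof (sum_f_R0_triangle f K).
  assert (0 <= sum_f_R0 (fun k => Rabs (f k)) K) by (apply cond_pos_sum; intros; apply Rabs_pos).
  cbn [sum_f_R0]; lra.
Qed.

Lemma sum_f_R0_ge_first (f : nat -> R) (n : nat) : (forall k, 0 <= f k) -> f 0%nat <= sum_f_R0 f n.
Proof.
  intros Hf; induction n as [|n IH]; simpl; [lra|]; pose proof (Hf (S n)); lra.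
Qed.

Lemma bessel_finite_sum_ge_fact (m : nat) (x : R) : (1 <= m)%nat ->
  INR (fact (m - 1)) <= bessel_finite_sum m x.
Proof.
  intros Hm; destruct m as [|m]; [lia|]; unfold bessel_finite_sum, fin_sum.
  replace (INR (fact (S m - 1))) with (bessel_finite_term (S m) x 0)
    by (unfold bessel_finite_term; rewrite Nat.sub_0_r; simpl; field).
  apply sum_f_R0_ge_first; intros k; unfold bessel_finite_term.
  apply Rmult_le_pos; [apply Rmult_le_pos|].
  - apply pos_INR.
  - apply Rlt_le, Rinv_0_lt_compat, INR_fact_lt_0.
  - apply pow_le; pose proof (pow2_ge_0 x); lra.
Qed.

Lemma pow40_lt_fact_sq (m : nat) : (30 <= m)%nat ->
  40 ^ m * (3 * 10 ^ 8) * (2 * INR m + 42) < INR (fact (m - 1)) * INR (fact m).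
Proof.
  induction 1 as [|m Hm IH].
  - rewrite <- !Zfact_IZR, <- mult_IZR, (pow_IZR 40 30), INR_IZR_INZ.
    replace (3 * 10 ^ 8) with (IZR 300000000) by (simpl; ring).
    replace (2 * IZR (Z.of_nat 30) + 42) with (IZR 102) by (simpl; ring).
    rewrite <- !mult_IZR; apply IZR_lt; vm_compute; reflexivity.
  - replace (S m - 1)%nat with m by lia.
    assert (Hfact : INR (fact m) = INR m * INR (fact (m - 1))).
    { destruct m as [|m]; [lia|].
      rewrite fact_simpl, mult_INR, Nat.sub_succ, Nat.sub_0_r; reflexivity. }
    rewrite fact_simpl, mult_INR, S_INR, <- tech_pow_Rmult.
    assert (30 <= INR m) by (replace 30 with (INR 30) by (simpl; ring); apply le_INR; exact Hm).
    pose proof (INR_fact_lt_0 m); pose proof (INR_fact_lt_0 (m - 1)).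
    assert (0 < 40 ^ m) by (apply pow_lt; lra).
    assert (40 * 40 ^ m * (3 * 10 ^ 8) * (2 * (INR m + 1) + 42)
            <= 80 * (40 ^ m * (3 * 10 ^ 8) * (2 * INR m + 42))) by nra.
    assert (80 * (INR (fact (m - 1)) * INR (fact m))
            <= INR m * (INR m + 1) * (INR (fact (m - 1)) * INR (fact m)))
      by (apply Rmult_le_compat_r; [apply Rlt_le, Rmult_lt_0_compat | nra]; assumption).
    replace (INR (fact m) * ((INR m + 1) * INR (fact m)))
      with (INR m * (INR m + 1) * (INR (fact (m - 1)) * INR (fact m))) by (rewrite Hfact; ring).
    lra.
Qed.

(* The leading term [(m-1)!] of the finite sum beats [40^m (2m + 42) E / m!],
   which bounds the rest. *)
Lemma expansion_neg_large_order (m : nat) (x L : R) :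
  (30 <= m)%nat -> x ^ 2 / 4 <= 40 -> 0 <= L <= 5 / 2 ->
  exists A C, bessel_sums_cv m x A C /\ bessel_expansion m x L A C < 0.
Proof.
  intros Hm Hx HL.
  assert (Hz : 0 <= x ^ 2 / 4) by (pose proof (pow2_ge_0 x); lra).
  destruct (bessel_series_tails m x 7 ltac:(lia)) as (A & C & Hcv & HtA & HtC).
  { assert (38 <= INR (S (m + 7)))
      by (replace 38 with (INR 38) by (simpl; ring); apply le_INR; lia).
    replace (INR 8) with 8 by (simpl; ring); nra. }
  exists A, C; split; [exact Hcv|].
  set (E := sum_f_R0 (fun k => 40 ^ k / INR (fact k)) 8).
  assert (HE : 0 <= E <= 3 * 10 ^ 8).
  { split; [apply cond_pos_sum; intros k; apply Rmult_le_pos;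
            [apply pow_le; lra | apply Rlt_le, Rinv_0_lt_compat, INR_fact_lt_0]|].
    apply exp40_partial_sum_le. }
  pose proof (INR_fact_lt_0 m) as Hfm.
  assert (HE_sum : forall c, c * (E / INR (fact m)) =
                      sum_f_R0 (fun k => c * (40 ^ k / INR (fact k) / INR (fact m))) 8).
  { intros c; replace (c * (E / INR (fact m))) with (c / INR (fact m) * E) by (unfold Rdiv; ring).
    unfold E; rewrite scal_sum; apply sum_eq; intros k _; unfold Rdiv; ring. }
  assert (HAb : Rabs A <= 2 * (1 * (E / INR (fact m)))).
  { apply Rle_trans with (1 := Rabs_lim_le_of_tail _ _ _ HtA); apply Rmult_le_compat_l; [lra|].
    rewrite HE_sum; apply sum_Rle; intros k _; rewrite Rmult_1_l; apply bessel_term_abs_le, Hx. }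
  assert (HCb : Rabs C <= 2 * ((INR m + 16) * (E / INR (fact m)))).
  { apply Rle_trans with (1 := Rabs_lim_le_of_tail _ _ _ HtC); apply Rmult_le_compat_l; [lra|].
    rewrite HE_sum; apply sum_Rle; intros k Hk; apply bessel_log_term_abs_le; assumption. }
  assert (Hbound : 2 * L * A - C <= (2 * INR m + 42) * (E / INR (fact m))).
  { pose proof (Rle_abs A); pose proof (Rle_abs (- C)); rewrite Rabs_Ropp in *.
    assert (2 * L * A <= 5 * Rabs A) by (pose proof (Rabs_pos A); nra).
    lra. }
  assert (Hpow : (x ^ 2 / 4) ^ m * (2 * L * A - C)
                 <= 40 ^ m * ((2 * INR m + 42) * (E / INR (fact m)))).
  { assert (0 <= (2 * INR m + 42) * (E / INR (fact m))).
    { pose proof (pos_INR m); pose proof (Rinv_0_lt_compat _ Hfm).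
      apply Rmult_le_pos; [|apply Rmult_le_pos]; lra. }
    apply Rle_trans with ((x ^ 2 / 4) ^ m * ((2 * INR m + 42) * (E / INR (fact m)))).
    - apply Rmult_le_compat_l; [apply pow_le|]; lra.
    - apply Rmult_le_compat_r; [|apply pow_incr]; lra. }
  assert (Hfact : 40 ^ m * ((2 * INR m + 42) * (E / INR (fact m))) < INR (fact (m - 1))).
  { apply (Rmult_lt_reg_r (INR (fact m))); [exact Hfm|].
    replace (40 ^ m * ((2 * INR m + 42) * (E / INR (fact m))) * INR (fact m))
      with (40 ^ m * E * (2 * INR m + 42)) by (field; apply INR_fact_neq_0).
    apply Rle_lt_trans with (2 := pow40_lt_fact_sq m Hm).
    apply Rmult_le_compat_r; [pose proof (pos_INR m); lra|].
    apply Rmult_le_compat_l; [apply pow_le|]; lra. }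
  pose proof (bessel_finite_sum_ge_fact m x ltac:(lia)).
  unfold bessel_expansion; lra.
Qed.

Lemma sq_4PI_div4_le : (4 * PI) ^ 2 / 4 <= 40.
Proof. pose proof PI_bounds; nra. Qed.

Lemma small_orders_apart0 (n : nat) :
  In n (seq 1 14) -> iapart0 (expansion_ival (2 * n) z_ival L_ival) = true.
Proof.
  revert n; apply (forallb_forall (fun n => iapart0 (expansion_ival (2 * n) z_ival L_ival))).
  vm_compute; reflexivity.
Qed.

Lemma expansion_apart0_small_order (n : nat) : (1 <= n <= 14)%nat ->
  exists A C, bessel_sums_cv (2 * n) (4 * PI) A C /\
    bessel_expansion (2 * n) (4 * PI) (ln (4 * PI / 2) + euler_gamma) A C <> 0.
Proof.
  intros Hn.
  destruct (encl_expansion (2 * n) (4 * PI) _ _ _ ltac:(lia) sq_4PI_div4_le encl_z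
              (encl_L _ log_term_bounds)) as (A & C & Hcv & Hencl).
  exists A, C; split; [exact Hcv|].
  apply (encl_apart0 _ _ Hencl), small_orders_apart0, in_seq; lia.
Qed.

Theorem lemma6p1 : forall n : nat, (1 <= n)%nat -> BesselY (2 * n) (4 * PI) <> 0.
Proof.
  intros n Hn HY.
  assert (Hexp : exists A C, bessel_sums_cv (2 * n) (4 * PI) A C /\
                   bessel_expansion (2 * n) (4 * PI) (ln (4 * PI / 2) + euler_gamma) A C <> 0).
  { destruct (le_lt_dec n 14) as [Hsmall | Hlarge].
    - apply expansion_apart0_small_order; lia.
    - pose proof log_term_bounds.
      destruct (expansion_neg_large_order (2 * n) (4 * PI) (ln (4 * PI / 2) + euler_gamma)
                  ltac:(lia) sq_4PI_div4_le ltac:(lra)) as (A & C & Hcv & Hneg).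
      exists A, C; split; [exact Hcv | lra]. }
  destruct Hexp as (A & C & Hcv & Hne); apply Hne.
  pose proof PI_bounds.
  rewrite <- (BesselY_expansion (2 * n) (4 * PI) A C ltac:(lra) Hcv), HY; ring.
Qed.
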